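(* Let $n\ge 4$ and let $G$ be a labeled star graph $K_{1,n-1}$ with vertex set $[n]$ (with any labeling). Then $X(G;\mathbf{x},q)$ is not symmetric.
   Context: A labeled graph is a finite simple graph with vertex set $[n]$. A proper coloring is $c\colon[n]\to\{1,2,\dots\}$ with adjacent vertices colored differently; $\operatorname{asc}(c)=\#\{ij\in E: i<j,\ c(i)<c(j)\}$. The CQF is $X(G;\mathbf{x},q)=\sum_{c \text{ proper}} x_{c(1)}\cdots x_{c(n)}q^{\operatorname{asc}(c)}$; it is symmetric if each coefficient of $q^k$ is a symmetric function. *)

From HB Require Import structures.
From mathcomp Require Import all_boot all_order all_algebra.
From mathcomp Require Import mpoly.
Set Implicit Arguments. Unset Strict Implicit. Unset Printing Implicit Defensive.
Import GRing.Theory.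
Local Open Scope ring_scope.

(* A labeled graph on [n] is modelled with vertex type 'I_n (vertex i+1 of the
   paper is the ordinal i; the order on labels is the order of the ordinals),
   and a boolean adjacency relation [e]. *)
Definition simple_graph n (e : rel 'I_n) : Prop :=
  (forall u, ~~ e u u) /\ (forall u v, e u v = e v u).

Definition is_star n (e : rel 'I_n) : Prop :=
  exists c : 'I_n, forall u v : 'I_n, e u v = (u != v) && ((u == c) || (v == c)).

(* Colorings with colors among the first N colors 1..N (color j+1 is the
   ordinal j : 'I_N). *)
Definition proper n N (e : rel 'I_n) (c : {ffun 'I_n -> 'I_N}) : bool :=
  [forall u, forall v, e u v ==> (c u != c v)].

Definition asc n N (e : rel 'I_n) (c : {ffun 'I_n -> 'I_N}) : nat :=
  #|[set p : 'I_n * 'I_n | [&& (p.1 < p.2)%N, e p.1 p.2 & (c p.1 < c p.2)%N]]|.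

(* The truncation of the chromatic quasisymmetric function to the variables
   x_1, ..., x_N (i.e. setting x_j = 0 for j > N), as a polynomial in N
   variables with coefficients in Z[q]. *)
Definition CQF_trunc n (e : rel 'I_n) (N : nat) : {mpoly {poly int}[N]} :=
  \sum_(c : {ffun 'I_n -> 'I_N} | proper e c)
     ('X ^+ asc e c : {poly int}) *: \prod_(i : 'I_n) 'X_(c i).

(* X(G; x, q) is symmetric iff every coefficient of q^k is a symmetric
   function, iff (since permutations of variables act coefficientwise in q and
   a formal power series is symmetric iff all its finite truncations are)
   each truncation is a symmetric polynomial. *)
Definition CQF_symmetric n (e : rel 'I_n) : Prop :=
  forall N : nat, CQF_trunc e N \is symmetric.

From Pilot Require Import Defs.
From HB Require Import structures.
From mathcomp Require Import all_boot all_order all_algebra.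
From mathcomp Require Import mpoly.
From mathcomp Require Import fingroup perm zify.
Set Implicit Arguments. Unset Strict Implicit. Unset Printing Implicit Defensive.
Import GRing.Theory Num.Theory.

(* Colors are 0, 1, 2.  Color the center 1, one leaf w with 0 and the other
   n - 2 leaves with 2: the content is x_0 x_1 x_2^(n-2).  Swapping colors 1
   and 2 gives the content x_0 x_1^(n-2) x_2, and since the color of the center
   of a properly colored star occurs exactly once, a coloring with that
   content colors the center 0 or 2, i.e. below or above all leaves; its
   ascents are then the leaves with larger labels than the center, or those
   with smaller labels.  The coloring of w has one ascent more or less than
   the former count, and w can be chosen so that it equals neither count, so
   the coefficients of q^k on the two contents differ. *)

Lemma sum_nat_of_bool (T : finType) (P : pred T) :
  \sum_(x : T) P x = #|[set x | P x]|.
Proof.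
by rewrite -sum1dep_card [RHS]big_mkcond; apply: eq_bigr => x _; case: (P x).
Qed.

Section Content.
Variables (n N : nat).
Implicit Types (e : rel 'I_n) (c : {ffun 'I_n -> 'I_N}).
Local Open Scope ring_scope.

Definition content c : 'X_{1..N} := (\sum_(i : 'I_n) U_(c i))%MM.

Lemma contentE c j : content c j = #|[set i | c i == j]|.
Proof.
rewrite /content mnm_sumE -sum_nat_of_bool.
by apply: eq_bigr => i _; rewrite mnm1E.
Qed.

Definition proper_colorings e (m : 'X_{1..N}) (k : nat) :
    {set {ffun 'I_n -> 'I_N}} :=
  [set c | [&& Defs.proper e c, content c == m & asc e c == k]].

Lemma coef_mcoeff_CQF_trunc e m k :
  ((CQF_trunc e N)@_m)`_k = #|proper_colorings e m k|%:R :> int.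
Proof.
rewrite /CQF_trunc raddf_sum /= coef_sum -sum_nat_of_bool natr_sum big_mkcond.
apply: eq_bigr => c _; rewrite mcoeffZ.
have -> : \prod_(i : 'I_n) ('X_(c i) : {mpoly {poly int}[N]}) = 'X_[content c].
  by rewrite /content (big_morph _ (@mpolyXD _ _) (@mpolyX0 _ _)).
rewrite mcoeffX mulr_natr coefMn coefXn.
by case: (Defs.proper e c); case: (content c == m); rewrite //= mulr1n eq_sym.
Qed.

Lemma card_proper_colorings_perm e (s : 'S_N) m k :
  CQF_trunc e N \is symmetric ->
  #|proper_colorings e m k|
  = #|proper_colorings e [multinom m (s i) | i < N] k|.
Proof.
move=> /issymP symX; apply/eqP; rewrite -(eqr_nat int) -!coef_mcoeff_CQF_trunc.
by rewrite -mcoeff_sym symX.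
Qed.

End Content.

Section Star.
Variables (n : nat) (e : rel 'I_n) (ctr : 'I_n).
Hypothesis star_e : forall u v, e u v = (u != v) && ((u == ctr) || (v == ctr)).

Local Notation leaves_above := [set j : 'I_n | ctr < j].
Local Notation leaves_below := [set j : 'I_n | j < ctr].

Lemma card_leaves : #|leaves_above| + #|leaves_below| = n.-1.
Proof.
rewrite -cardsUI -[in RHS](card_ord n) -(cardsC1 ctr).
have -> : leaves_above :&: leaves_below = set0.
  by apply/setP => j; rewrite !inE; case: ltngtP.
rewrite cards0 addn0; apply: eq_card => j.
by rewrite !inE -(inj_eq val_inj) neq_ltn orbC.
Qed.

Lemma proper_starP N (c : {ffun 'I_n -> 'I_N}) :
  reflect (forall v, v != ctr -> c v != c ctr) (Defs.proper e c).
Proof.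
apply: (iffP forallP) => [pc v vctr | leaves u].
  by move/forallP: (pc v) => /(_ ctr); rewrite star_e vctr eqxx orbT.
apply/forallP => v; apply/implyP.
rewrite star_e => /andP [uv /orP [] /eqP Ectr].
  by rewrite Ectr eq_sym leaves // -Ectr eq_sym.
by rewrite Ectr leaves // -Ectr.
Qed.

Lemma content_center N (c : {ffun 'I_n -> 'I_N}) :
  Defs.proper e c -> content c (c ctr) = 1.
Proof.
move=> /proper_starP leaves; rewrite contentE -(cards1 ctr).
apply: eq_card => v.
rewrite !inE; have [-> | vctr] := eqVneq v ctr; first by rewrite eqxx.
exact/negbTE/leaves.
Qed.

Lemma asc_star N (c : {ffun 'I_n -> 'I_N}) :
  asc e c = #|[set j in leaves_above | c ctr < c j]|
          + #|[set i in leaves_below | c i < c ctr]|.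
Proof.
have ascent_pair (i j : 'I_n) : [&& i < j, e i j & c i < c j] =
    if i == ctr then (ctr < j) && (c ctr < c j)
    else (j == ctr) && ((i < ctr) && (c i < c ctr)).
  rewrite star_e; have [-> | ictr] := eqVneq i ctr.
    by rewrite /= -val_eqE neq_ltn; case: ltnP.
  by case: (eqVneq j ctr) => [-> |] /=; rewrite ?ictr ?andbT ?andbF.
rewrite /asc -[in LHS]sum_nat_of_bool.
transitivity (\sum_(i : 'I_n) \sum_(j : 'I_n) [&& i < j, e i j & c i < c j]).
  by rewrite pair_bigA.
rewrite (bigD1 ctr) //= -!sum_nat_of_bool; congr (_ + _).
  by apply: eq_bigr => j _; rewrite ascent_pair eqxx inE.
rewrite [RHS](bigD1 ctr) //= !inE ltnn add0n; apply: eq_bigr => i ictr.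
rewrite (bigD1 ctr) //= ascent_pair (negbTE ictr) eqxx inE.
rewrite big1 ?addn0 // => j jctr.
by rewrite ascent_pair (negbTE ictr) (negbTE jctr).
Qed.

Lemma asc_star_center_min N (c : {ffun 'I_n -> 'I_N}) :
  (forall v, v != ctr -> c ctr < c v) -> asc e c = #|leaves_above|.
Proof.
move=> cmin; rewrite asc_star.
have -> : [set i in leaves_below | c i < c ctr] = set0.
  apply/setP => v; rewrite !inE; apply/negbTE/andP => -[v_ctr]; apply/negP.
  by rewrite -leqNgt ltnW // cmin // -val_eqE ltn_eqF.
rewrite cards0 addn0; apply: eq_card => v; rewrite !inE.
by apply: andb_idr => ctr_v; rewrite cmin // -val_eqE gtn_eqF.
Qed.

Lemma asc_star_center_max N (c : {ffun 'I_n -> 'I_N}) :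
  (forall v, v != ctr -> c v < c ctr) -> asc e c = #|leaves_below|.
Proof.
move=> cmax; rewrite asc_star.
have -> : [set j in leaves_above | c ctr < c j] = set0.
  apply/setP => v; rewrite !inE; apply/negbTE/andP => -[ctr_v]; apply/negP.
  by rewrite -leqNgt ltnW // cmax // -val_eqE gtn_eqF.
rewrite cards0 add0n; apply: eq_card => v; rewrite !inE.
by apply: andb_idr => v_ctr; rewrite cmax // -val_eqE ltn_eqF.
Qed.

Lemma asc_star_center_not_middle (c : {ffun 'I_n -> 'I_3}) :
  Defs.proper e c -> c ctr != inord 1 ->
  asc e c = #|leaves_above| \/ asc e c = #|leaves_below|.
Proof.
move=> /proper_starP leaves; rewrite -(inj_eq val_inj) /= inordK // => not_mid.
have [c0 | c2] : c ctr = ord0 \/ c ctr = ord_max.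
  by move: not_mid; case: (c ctr) => -[|[|[|k]]] // lt3 _;
    [left | right]; apply: val_inj.
by left; apply: asc_star_center_min => v /leaves; rewrite c0 lt0n.
right; apply: asc_star_center_max => v /leaves; rewrite c2 ltn_neqAle => ->.
by rewrite -ltnS ltn_ord.
Qed.

Definition star_coloring (w : 'I_n) : {ffun 'I_n -> 'I_3} :=
  [ffun v => if v == ctr then inord 1 else if v == w then ord0 else ord_max].

Lemma star_coloringE w v :
  star_coloring w v = (if v == ctr then 1 else if v == w then 0 else 2) :> nat.
Proof. by rewrite ffunE; case: ifP => _; [exact: inordK | case: ifP]. Qed.

Lemma star_coloring_proper w : w != ctr -> Defs.proper e (star_coloring w).
Proof.
move=> wctr; apply/proper_starP => v vctr.
by rewrite -(inj_eq val_inj) /= !star_coloringE eqxx (negbTE vctr); case: ifP.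
Qed.

Lemma asc_star_coloring w : w != ctr ->
  asc e (star_coloring w) + (ctr < w) = #|leaves_above| + (w < ctr).
Proof.
move=> wctr; set c := star_coloring w.
have above : #|[set j in leaves_above | c ctr < c j]| = #|leaves_above :\ w|.
  apply: eq_card => v; rewrite !inE !star_coloringE eqxx.
  case: (eqVneq v ctr) => [-> | vctr]; first by rewrite ltnn andbF.
  by case: (v == w); rewrite /= ?andbF ?andbT.
have below : #|[set i in leaves_below | c i < c ctr]| = (w < ctr).
  case: ltnP => [w_ctr | ctr_w].
    suff -> : [set i in leaves_below | c i < c ctr] = [set w] by rewrite cards1.
    apply/setP => v; rewrite !inE !star_coloringE eqxx.
    case: (eqVneq v w) => [-> | vw]; first by rewrite (negbTE wctr) w_ctr.
    by case: (v == ctr); rewrite andbF.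
  apply/eqP; rewrite cards_eq0; apply/eqP/setP => v.
  rewrite !inE !star_coloringE eqxx.
  case: (eqVneq v ctr) => [-> | vctr]; first by rewrite ltnn.
  by case: (eqVneq v w) => [-> |]; rewrite ?andbF // ltnNge ctr_w.
rewrite asc_star above below (cardsD1 w leaves_above) inE; lia.
Qed.

Lemma content_star_coloring_max w : w != ctr ->
  content (star_coloring w) ord_max = n.-2.
Proof.
move=> wctr; rewrite contentE.
have -> : [set v | star_coloring w v == ord_max] = ~: [set ctr; w].
  apply/setP => v; rewrite !inE -(inj_eq val_inj) /= star_coloringE negb_or.
  by case: (v == ctr); case: (v == w).
have := cardsC [set ctr; w]; rewrite cards2 eq_sym wctr card_ord; lia.
Qed.

Lemma exists_star_coloring_asc_not_extreme : 4 <= n ->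
  exists w, [/\ w != ctr, asc e (star_coloring w) != #|leaves_above|
                        & asc e (star_coloring w) != #|leaves_below|].
Proof.
move=> n_ge4; have := card_leaves.
have leaf_neq_ctr (w : 'I_n) : (ctr < w) || (w < ctr) -> w != ctr.
  by rewrite -(inj_eq val_inj) /= neq_ltn orbC.
have [/andP [/card_gt0P [w]] | ] :=
  boolP ((0 < #|leaves_below|) && (#|leaves_below| != #|leaves_above|.+1)).
  rewrite inE => w_ctr /eqP below_ne sum_leaves.
  have wctr : w != ctr by rewrite leaf_neq_ctr // w_ctr orbT.
  have := asc_star_coloring wctr; rewrite w_ctr ltnNge ltnW // addn0 addn1.
  by exists w; split => //; apply/eqP; lia.
rewrite negb_and -leqNgt negbK => below_extreme sum_leaves.
have /card_gt0P [w] : 0 < #|leaves_above|.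
  by move: below_extreme => /orP [] /eqP; lia.
rewrite inE => ctr_w; have wctr : w != ctr by rewrite leaf_neq_ctr // ctr_w.
have := asc_star_coloring wctr; rewrite ctr_w ltnNge ltnW // addn0 addn1.
by exists w; split => //; apply/eqP; move: below_extreme => /orP [] /eqP; lia.
Qed.

End Star.

Theorem proposition5p2 (n : nat) (e : rel 'I_n) :
  (4 <= n)%N -> simple_graph e -> is_star e -> ~ CQF_symmetric e.
Proof.
move=> n_ge4 _ [ctr star_e] symX.
have [w [wctr asc_ne_above asc_ne_below]] :=
  exists_star_coloring_asc_not_extreme star_e n_ge4.
set c := star_coloring ctr w; pose s : 'S_3 := tperm (inord 1) ord_max.
have := card_proper_colorings_perm s (content c) (asc e c) (symX 3).
have -> : proper_colorings e [multinom content c (s i) | i < 3] (asc e c) = set0.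
  apply/setP => d; rewrite !inE.
  apply/and3P => -[proper_d /eqP content_d /eqP asc_d].
  have : d ctr != inord 1.
    apply/eqP => d_mid; have := content_center star_e proper_d.
    by rewrite d_mid content_d mnmE tpermL content_star_coloring_max //; lia.
  move/(asc_star_center_not_middle star_e proper_d).
  by case; rewrite asc_d => /eqP; apply/negP.
rewrite cards0 => /eqP; rewrite cards_eq0 => /eqP/setP/(_ c).
by rewrite !inE star_coloring_proper // !eqxx.
Qed.
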